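(* Let $U\subseteq U'\subset\mathbb Z^2$ be two upward closed sets of grid points, i.e., $(x,y)\in U\Rightarrow(x,y+1)\in U$, and likewise for $U'$. Let $f$ denote one peeling step. Then $f(U)\subseteq f(U')$.
   Context: One peeling step applied to a set $U$ of points is $f(U)=U\setminus\{\text{vertices (extreme points) of }\mathrm{conv}(U)\}$. *)

From HB Require Import structures.
From mathcomp Require Import all_boot all_order all_algebra.
From mathcomp Require Import reals.
Set Implicit Arguments. Unset Strict Implicit. Unset Printing Implicit Defensive.
Import Order.TTheory GRing.Theory Num.Theory.
Local Open Scope ring_scope.

Definition gridset := int * int -> Prop.

Definition upward_closed (U : gridset) : Prop :=
  forall x y : int, U (x, y) -> U (x, y + 1).

Definition embed (R : realType) (p : int * int) : R * R :=
  ((p.1)%:~R, (p.2)%:~R).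

Definition conv (R : realType) (S : R * R -> Prop) (x : R * R) : Prop :=
  exists (n : nat) (w : 'I_n -> R) (p : 'I_n -> R * R),
    (forall i, 0 <= w i) /\ \sum_(i < n) w i = 1 /\ (forall i, S (p i)) /\
    x.1 = \sum_(i < n) w i * (p i).1 /\ x.2 = \sum_(i < n) w i * (p i).2.

Definition extreme_point (R : realType) (C : R * R -> Prop) (x : R * R) : Prop :=
  C x /\ forall (y z : R * R) (t : R), C y -> C z -> 0 < t < 1 ->
    x = ((1 - t) * y.1 + t * z.1, (1 - t) * y.2 + t * z.2) -> y = z.

Definition embed_set (R : realType) (U : gridset) : R * R -> Prop :=
  fun q => exists2 p, U p & q = @embed R p.

Definition peel (R : realType) (U : gridset) : gridset :=
  fun p => U p /\ ~ @extreme_point R (@conv R (@embed_set R U)) (@embed R p).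

From HB Require Import structures.
From mathcomp Require Import all_boot all_order all_algebra.
From mathcomp Require Import reals.
Import GRing.Theory.
Local Open Scope ring_scope.

(* Peeling is monotone for arbitrary U ⊆ U': conv U ⊆ conv U', and a point of
   conv U that is a vertex of the larger set conv U' is a vertex of conv U,
   since every segment in conv U is a segment in conv U'. *)

Section Convex.

Variable R : realType.

Lemma subset_conv (S : R * R -> Prop) x : S x -> conv S x.
Proof.
move=> Sx; exists 1%N, (fun _ => 1), (fun _ => x).
by rewrite !big_ord1 !mul1r; repeat split => // i.
Qed.

Lemma conv_subset (S S' : R * R -> Prop) :
  (forall q, S q -> S' q) -> forall x, conv S x -> conv S' x.
Proof.
move=> SS' x [n [w [p [w_ge0 [w_sum1 [Sp [x1 x2]]]]]]].
by exists n, w, p; split=> //; split=> //; split=> // i; apply: SS'.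
Qed.

Lemma extreme_point_subset (C C' : R * R -> Prop) x :
  (forall q, C q -> C' q) -> C x -> extreme_point C' x -> extreme_point C x.
Proof.
move=> CC' Cx [_ extx]; split=> // y z t Cy Cz t01 xE.
exact: (extx y z t (CC' _ Cy) (CC' _ Cz)).
Qed.

End Convex.

Lemma embed_set_subset (R : realType) (U U' : gridset) :
  (forall p, U p -> U' p) -> forall q, @embed_set R U q -> @embed_set R U' q.
Proof. by move=> UU' q [p Up ->]; exists p => //; apply: UU'. Qed.

Lemma peel_subset (R : realType) (U U' : gridset) :
  (forall p, U p -> U' p) -> forall p, @peel R U p -> @peel R U' p.
Proof.
move=> UU' p [Up not_ext]; split; first exact: UU'.
move=> ext'; apply: not_ext; apply: extreme_point_subset ext'.
- exact/conv_subset/embed_set_subset.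
- by apply: subset_conv; exists p.
Qed.

Theorem mainTheorem5 (R : realType) (U U' : gridset) :
  (forall p, U p -> U' p) ->
  upward_closed U -> upward_closed U' ->
  forall p, @peel R U p -> @peel R U' p.
Proof. by move=> UU' _ _; apply: peel_subset. Qed.
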